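(* Let $0\le k<n$ and let $U\subset Gr(k,n)$. If $U$ is open, then $\bigcup_{\ell\in U}\ell$ is an open subset of $\mathbb{P}^n_{\mathbb{C}}$; if $U$ is closed, then $\bigcup_{\ell\in U}\ell$ is a closed subset of $\mathbb{P}^n_{\mathbb{C}}$.
   Context: $Gr(k,n)$ is the Grassmannian of $k$-dimensional projective subspaces of $\mathbb{P}^n_{\mathbb{C}}$, topologized by the Hausdorff metric on closed subsets of $\mathbb{P}^n_{\mathbb{C}}$ induced by the Fubini–Study metric (equivalently via the Plücker embedding into $\mathbb{P}(\bigwedge^{k+1}\mathbb{C}^{n+1})$). *)

From HB Require Import structures.
From mathcomp Require Import all_boot all_order all_algebra.
From mathcomp Require Import all_classical all_reals all_analysis.
From mathcomp Require Import complex.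
Set Implicit Arguments. Unset Strict Implicit. Unset Printing Implicit Defensive.
Import Order.TTheory GRing.Theory Num.Theory.
Local Open Scope ring_scope.
Local Open Scope classical_set_scope.

(* Vectors of C^(n+1) are row vectors 'rV[R[i]]_n.+1; a point of P^n is
   represented by any nonzero vector of the corresponding line. *)

Definition hprod (R : realType) (m : nat) (u v : 'rV[R[i]]_m) : R[i] :=
  \sum_(j < m) u ord0 j * complex.conjc (v ord0 j).

Definition vnorm (R : realType) (m : nat) (u : 'rV[R[i]]_m) : R :=
  Num.sqrt (complex.ComplexField.Normc.normc (hprod u u)).

Definition dFS (R : realType) (m : nat) (u v : 'rV[R[i]]_m) : R :=
  acos (complex.ComplexField.Normc.normc (hprod u v) / (vnorm u * vnorm v)).

(* Subsets of P^n are represented by sets of nonzero vectors that are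
   invariant under nonzero scalings (cones without 0). *)
Definition PSubset (R : realType) (m : nat) (A : set 'rV[R[i]]_m) : Prop :=
  (forall v, A v -> v != 0) /\ (forall v c, A v -> c != 0 -> A (c *: v)).

Definition PS_open (R : realType) (m : nat) (A : set 'rV[R[i]]_m) : Prop :=
  forall v, A v -> exists2 e : R, 0 < e &
    forall w, w != 0 -> dFS v w < e -> A w.

Definition PS_closed (R : realType) (m : nat) (A : set 'rV[R[i]]_m) : Prop :=
  PS_open [set w | w != 0 /\ ~ A w].

(* Gr(k,n): projective k-planes of P^n = (k+1)-dim linear subspaces of C^(n+1). *)
Definition isGr (R : realType) (k n : nat) (L : {vspace 'rV[R[i]]_n.+1}) : Prop :=
  \dim L = k.+1.
Arguments isGr : clear implicits.

Definition dist_pt (R : realType) (m : nat) (x : 'rV[R[i]]_m)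
  (L : {vspace 'rV[R[i]]_m}) : R :=
  inf [set dFS x y | y in [set y | (y \in L) /\ y != 0]].

Definition dHaus (R : realType) (m : nat) (L M : {vspace 'rV[R[i]]_m}) : R :=
  Num.max (sup [set dist_pt x M | x in [set x | (x \in L) /\ x != 0]])
          (sup [set dist_pt y L | y in [set y | (y \in M) /\ y != 0]]).

Definition Gr_open (R : realType) (k n : nat)
  (U : set {vspace 'rV[R[i]]_n.+1}) : Prop :=
  forall L, U L -> exists2 e : R, 0 < e &
    forall M, isGr R k n M -> dHaus L M < e -> U M.
Arguments Gr_open : clear implicits.

Definition Gr_closed (R : realType) (k n : nat)
  (U : set {vspace 'rV[R[i]]_n.+1}) : Prop :=
  Gr_open R k n [set M | isGr R k n M /\ ~ U M].
Arguments Gr_closed : clear implicits.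

Definition Gr_union (R : realType) (n : nat)
  (U : set {vspace 'rV[R[i]]_n.+1}) : set 'rV[R[i]]_n.+1 :=
  [set v | v != 0 /\ exists2 L, U L & v \in L].

(* Openness: for [w] close to a point [v] of [L], the linear map
   [x |-> x + <x, u> (w' - u)], where [u] is the unit vector along [v] and [w'] the
   unit vector along [w] with the phase making [<w', u>] real and positive, moves
   every vector of an orthonormal frame of [L] by at most [|w' - u|], which is small;
   its image [M] contains [w], and spans of uniformly close frames are close in the
   Hausdorff distance, so [M] lies in [U].
   Closedness: fix [w] outside the union. Frames of [k+1] vectors live in a compact
   cube of real coordinates, and every frame [f0] has a neighbourhood on which the
   spans in [U] of orthonormal frames stay at distance bounded below from [[w]]:
   either [f0] is not orthonormal, and neither are nearby frames; or its span is not
   in [U], and neither are the spans of nearby frames since [U] is closed; or [w] is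
   not in its span, and then Bessel's inequality for [w] is strict, uniformly so
   nearby. Compactness turns these local bounds into a uniform one. *)

From HB Require Import structures.
From mathcomp Require Import all_boot all_order all_algebra.
From mathcomp Require Import all_classical all_reals all_analysis.
From mathcomp Require Import complex.
From mathcomp Require Import lra ring.

Set Implicit Arguments. Unset Strict Implicit. Unset Printing Implicit Defensive.
Import Order.TTheory GRing.Theory Num.Theory.
Local Open Scope ring_scope.
Local Open Scope complex_scope.

Local Notation normc := ComplexField.Normc.normc.

Section ComplexModulus.
Variable R : realType.
Implicit Types (z w : R[i]) (r : R).

Lemma normc_ge0 z : 0 <= normc z.
Proof. by case: z => a b; rewrite /= sqrtr_ge0. Qed.

Lemma normc_conj z : normc (conjc z) = normc z.
Proof. by case: z => a b /=; rewrite sqrrN. Qed.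

Lemma normc_real r : normc (r%:C) = `|r|.
Proof. by rewrite /= expr0n /= addr0 sqrtr_sqr. Qed.

Lemma normc_sqr z : normc z ^+ 2 = complex.Re z ^+ 2 + complex.Im z ^+ 2.
Proof. by case: z => a b /=; rewrite sqr_sqrtr // addr_ge0 // sqr_ge0. Qed.

Lemma mulc_conj z : z * conjc z = (normc z ^+ 2)%:C.
Proof.
rewrite normc_sqr; case: z => a b /=; apply/eqP; rewrite eq_complex /=.
by apply/andP; split; apply/eqP; ring.
Qed.

Lemma normc_ge_Re z : `|complex.Re z| <= normc z.
Proof.
rewrite -(@ler_pXn2r _ 2) ?nnegrE ?normc_ge0 // real_normK ?num_real //.
by rewrite normc_sqr lerDl sqr_ge0.
Qed.

Lemma normc_ge_Im z : `|complex.Im z| <= normc z.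
Proof.
rewrite -(@ler_pXn2r _ 2) ?nnegrE ?normc_ge0 // real_normK ?num_real //.
by rewrite normc_sqr lerDr sqr_ge0.
Qed.

Lemma normcB_ge z w : normc z - normc w <= normc (z - w).
Proof. by have := le_normcD (z - w) w; rewrite subrK; lra. Qed.

End ComplexModulus.

Section InnerProduct.
Variables (R : realType) (m : nat).
Implicit Types (u v w : 'rV[R[i]]_m) (a : R[i]).

Lemma hprodDl u v w : hprod (u + v) w = hprod u w + hprod v w.
Proof. by rewrite /hprod -big_split; apply: eq_bigr => j _; rewrite !mxE mulrDl. Qed.

Lemma hprodZl a u w : hprod (a *: u) w = a * hprod u w.
Proof. by rewrite /hprod mulr_sumr; apply: eq_bigr => j _; rewrite !mxE mulrA. Qed.

Lemma conj_hprod u v : conjc (hprod u v) = hprod v u.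
Proof.
rewrite /hprod rmorph_sum; apply: eq_bigr => j _.
by rewrite rmorphM /= conjcK mulrC.
Qed.

Lemma normc_hprodC u v : normc (hprod u v) = normc (hprod v u).
Proof. by rewrite -conj_hprod normc_conj. Qed.

Lemma hprodDr u v w : hprod w (u + v) = hprod w u + hprod w v.
Proof. by rewrite -conj_hprod hprodDl rmorphD /= !conj_hprod. Qed.

Lemma hprodZr a u w : hprod w (a *: u) = conjc a * hprod w u.
Proof. by rewrite -conj_hprod hprodZl rmorphM /= !conj_hprod. Qed.

Lemma hprod0l w : hprod 0 w = 0.
Proof. by rewrite /hprod big1 // => j _; rewrite mxE mul0r. Qed.

Lemma hprod0r w : hprod w 0 = 0.
Proof. by rewrite -conj_hprod hprod0l rmorph0. Qed.

Lemma hprodNl u w : hprod (- u) w = - hprod u w.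
Proof. by rewrite -scaleN1r hprodZl mulN1r. Qed.

Lemma hprodNr u w : hprod w (- u) = - hprod w u.
Proof. by rewrite -conj_hprod hprodNl rmorphN /= conj_hprod. Qed.

Lemma hprodBl u v w : hprod (u - v) w = hprod u w - hprod v w.
Proof. by rewrite hprodDl hprodNl. Qed.

Lemma hprodBr u v w : hprod w (u - v) = hprod w u - hprod w v.
Proof. by rewrite hprodDr hprodNr. Qed.

Lemma hprod_suml (I : Type) (s : seq I) (P : pred I) (F : I -> 'rV[R[i]]_m) w :
  hprod (\sum_(i <- s | P i) F i) w = \sum_(i <- s | P i) hprod (F i) w.
Proof. by elim/big_rec2: _ => [|i y x _ h]; rewrite ?hprod0l // hprodDl h. Qed.

Lemma hprod_sumr (I : Type) (s : seq I) (P : pred I) (F : I -> 'rV[R[i]]_m) w :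
  hprod w (\sum_(i <- s | P i) F i) = \sum_(i <- s | P i) hprod w (F i).
Proof. by elim/big_rec2: _ => [|i y x _ h]; rewrite ?hprod0r // hprodDr h. Qed.

Lemma hprodxx_sum u : hprod u u = (\sum_(j < m) normc (u ord0 j) ^+ 2)%:C.
Proof. by rewrite /hprod rmorph_sum; apply: eq_bigr => j _; rewrite mulc_conj. Qed.

Lemma vnorm_sqr u : vnorm u ^+ 2 = \sum_(j < m) normc (u ord0 j) ^+ 2.
Proof.
have sum_ge0 : 0 <= \sum_(j < m) normc (u ord0 j) ^+ 2.
  by apply: sumr_ge0 => j _; rewrite sqr_ge0.
by rewrite /vnorm hprodxx_sum normc_real ger0_norm // sqr_sqrtr.
Qed.

Lemma vnorm_ge0 u : 0 <= vnorm u.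
Proof. exact: sqrtr_ge0. Qed.

Lemma hprodxx u : hprod u u = (vnorm u ^+ 2)%:C.
Proof. by rewrite vnorm_sqr hprodxx_sum. Qed.

Lemma vnorm_eq0 u : vnorm u = 0 -> u = 0.
Proof.
move=> u0; have /eqP : \sum_(j < m) normc (u ord0 j) ^+ 2 = 0.
  by rewrite -vnorm_sqr u0 expr0n.
rewrite psumr_eq0 => [/allP hu|j _]; last by rewrite sqr_ge0.
apply/rowP => j; rewrite mxE; apply: ComplexField.Normc.eq0_normc.
have /hu : j \in index_enum 'I_m by rewrite mem_index_enum.
by rewrite /= sqrf_eq0 => /eqP.
Qed.

Lemma vnorm0 : vnorm (0 : 'rV[R[i]]_m) = 0.
Proof. by rewrite /vnorm hprod0l ComplexField.Normc.normc0 sqrtr0. Qed.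

Lemma vnorm_gt0 u : u != 0 -> 0 < vnorm u.
Proof.
move=> u0; rewrite lt_def vnorm_ge0 andbT.
by apply: contra u0 => /eqP/vnorm_eq0 ->.
Qed.

Lemma vnormZ a u : vnorm (a *: u) = normc a * vnorm u.
Proof.
apply/eqP; rewrite -(@eqrXn2 _ 2) ?mulr_ge0 ?vnorm_ge0 ?normc_ge0 //.
apply/eqP/complexI; rewrite -hprodxx hprodZl hprodZr mulrA mulc_conj (hprodxx u).
by rewrite -rmorphM exprMn.
Qed.

Definition normalize u := ((vnorm u)^-1)%:C *: u.

Lemma vnorm_normalize u : u != 0 -> vnorm (normalize u) = 1.
Proof.
move=> u0; rewrite vnormZ normc_real ger0_norm ?invr_ge0 ?vnorm_ge0 //.
by rewrite mulVf // gt_eqF // vnorm_gt0.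
Qed.

Lemma vnormN u : vnorm (- u) = vnorm u.
Proof. by rewrite -scaleN1r vnormZ normcN ComplexField.Normc.normc1 mul1r. Qed.

Lemma vnormB_sym u v : vnorm (u - v) = vnorm (v - u).
Proof. by rewrite -vnormN opprB. Qed.

Lemma vnormD_sqr u v :
  vnorm (u + v) ^+ 2 = vnorm u ^+ 2 + vnorm v ^+ 2 + 2 * complex.Re (hprod u v).
Proof.
have ReE (x : 'rV[R[i]]_m) : complex.Re (hprod x x) = vnorm x ^+ 2 by rewrite hprodxx.
rewrite -!ReE hprodDl !hprodDr -[hprod v u]conj_hprod.
by case: (hprod u u) (hprod u v) (hprod v v) => a1 b1 [a2 b2] [a3 b3] /=; ring.
Qed.

Lemma vnormB_sqr u v :
  vnorm (u - v) ^+ 2 = vnorm u ^+ 2 + vnorm v ^+ 2 - 2 * complex.Re (hprod u v).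
Proof. by rewrite vnormD_sqr vnormN hprodNr; case: (hprod u v) => a b /=; ring. Qed.

(* Cauchy--Schwarz: expand [0 <= |u - c v|^2] for the projection coefficient [c = <u,v>/|v|^2]. *)
Lemma normc_hprod_le u v : normc (hprod u v) <= vnorm u * vnorm v.
Proof.
have [->|v0] := eqVneq v 0; first by rewrite hprod0r ComplexField.Normc.normc0 vnorm0 mulr0.
have vpos : 0 < vnorm v ^+ 2 by rewrite exprn_gt0 // vnorm_gt0.
set p := hprod u v; set c := p / (vnorm v ^+ 2)%:C.
have normc_c : normc c = normc p / vnorm v ^+ 2.
  by rewrite ComplexField.Normc.normcM ComplexField.Normc.normcV normc_real ger0_norm // sqr_ge0.
have conj_c : conjc c = conjc p / (vnorm v ^+ 2)%:C.
  by rewrite rmorphM fmorphV; congr (_ * _^-1); exact: conjc_real.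
have hprod_c : hprod u (c *: v) = (normc p ^+ 2 / vnorm v ^+ 2)%:C.
  rewrite hprodZr conj_c -/p mulrAC [conjc p * p]mulrC mulc_conj.
  by rewrite -(fmorphV (real_complex R)) -rmorphM.
have := sqr_ge0 (vnorm (u - c *: v)).
rewrite vnormB_sqr vnormZ hprod_c /= normc_c => proj_ge0.
rewrite -(@ler_pXn2r _ 2) ?nnegrE ?mulr_ge0 ?vnorm_ge0 ?normc_ge0 // exprMn.
rewrite -ler_pdivrMr //; move: proj_ge0.
have vv0 : vnorm v != 0 by rewrite gt_eqF // vnorm_gt0.
have -> : (normc p / vnorm v ^+ 2 * vnorm v) ^+ 2 = normc p ^+ 2 / vnorm v ^+ 2.
  by field.
lra.
Qed.

Lemma vnormD u v : vnorm (u + v) <= vnorm u + vnorm v.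
Proof.
rewrite -(@ler_pXn2r _ 2) ?nnegrE ?addr_ge0 ?vnorm_ge0 // vnormD_sqr sqrrD.
have := ler_norm (complex.Re (hprod u v)); have := normc_ge_Re (hprod u v).
have := normc_hprod_le u v; lra.
Qed.

Lemma vnorm_sum (I : Type) (s : seq I) (P : pred I) (F : I -> 'rV[R[i]]_m) :
  vnorm (\sum_(i <- s | P i) F i) <= \sum_(i <- s | P i) vnorm (F i).
Proof.
elim/big_rec2: _ => [|i y x _ h]; first by rewrite vnorm0.
by apply: le_trans (vnormD _ _) _; rewrite lerD2l.
Qed.

Lemma normc_coord_le u j : normc (u ord0 j) <= vnorm u.
Proof.
rewrite -(@ler_pXn2r _ 2) ?nnegrE ?normc_ge0 ?vnorm_ge0 // vnorm_sqr (bigD1 j) //=.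
by rewrite lerDl sumr_ge0 // => i _; rewrite sqr_ge0.
Qed.

End InnerProduct.

Definition cosFS (R : realType) (m : nat) (u v : 'rV[R[i]]_m) : R :=
  normc (hprod u v) / (vnorm u * vnorm v).

Section FubiniStudyCosine.
Variables (R : realType) (m : nat).
Implicit Types (u v : 'rV[R[i]]_m).

Lemma dFSE u v : dFS u v = acos (cosFS u v).
Proof. by []. Qed.

Lemma cosFSC u v : cosFS u v = cosFS v u.
Proof. by rewrite /cosFS normc_hprodC [vnorm u * _]mulrC. Qed.

Lemma cosFS_ge0 u v : 0 <= cosFS u v.
Proof. by rewrite /cosFS divr_ge0 ?mulr_ge0 ?vnorm_ge0 ?normc_ge0. Qed.

Lemma cosFS_le1 u v : u != 0 -> v != 0 -> cosFS u v <= 1.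
Proof.
move=> u0 v0; rewrite /cosFS ler_pdivrMr ?mulr_gt0 ?vnorm_gt0 // mul1r.
exact: normc_hprod_le.
Qed.

Lemma cosFS_itv u v : u != 0 -> v != 0 -> -1 <= cosFS u v <= 1.
Proof.
move=> u0 v0; rewrite cosFS_le1 // andbT.
by apply: le_trans (cosFS_ge0 u v); rewrite lerN10.
Qed.

Lemma cosFS_ge_perturb u v s : u != 0 -> 0 <= s < 1 ->
  vnorm (u - v) <= s * vnorm u -> v != 0 /\ (1 - s) / (1 + s) <= cosFS u v.
Proof.
move=> u0 /andP[s0 s1] huv; have nu := vnorm_gt0 u0.
have nv : vnorm v <= (1 + s) * vnorm u.
  by have := vnormD u (v - u); rewrite addrC subrK vnormB_sym; lra.
have hprod_ge : (1 - s) * vnorm u ^+ 2 <= normc (hprod u v).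
  have -> : hprod u v = hprod u u - hprod u (u - v) by rewrite hprodBr opprB addrC subrK.
  apply: le_trans (normcB_ge _ _).
  rewrite hprodxx normc_real ger0_norm ?sqr_ge0 //.
  by have := normc_hprod_le u (u - v); have := vnorm_ge0 (u - v); nra.
have v0 : v != 0.
  apply: contraTneq hprod_ge => ->.
  rewrite hprod0r ComplexField.Normc.normc0 -ltNge.
  by rewrite mulr_gt0 ?exprn_gt0 // subr_gt0.
split => //; have := vnorm_gt0 v0 => nv0.
rewrite /cosFS ler_pdivrMr; last lra.
rewrite mulrAC ler_pdivlMr ?mulr_gt0 //.
by have := ler_wpM2l (ltW nu) nv; nra.
Qed.

End FubiniStudyCosine.

Section Arccos.
Variable R : realType.
Implicit Types x y : R.

Lemma acos_in_itv x : -1 <= x <= 1 -> acos x \in `[0, pi].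
Proof. by move=> h; rewrite in_itv /= acos_ge0 // acos_lepi. Qed.

Lemma acos_ltr x y : -1 <= x -> x < y -> y <= 1 -> acos y < acos x.
Proof.
move=> x1 xy y1.
have hx : -1 <= x <= 1 by rewrite x1 (le_trans (ltW xy) y1).
have hy : -1 <= y <= 1 by rewrite y1 andbT (le_trans x1 (ltW xy)).
by have := ltr_cos (acos_in_itv hy) (acos_in_itv hx); rewrite !acosK ?in_itv //= => <-.
Qed.

Lemma acos_ler x y : -1 <= x -> x <= y -> y <= 1 -> acos y <= acos x.
Proof.
move=> x1; rewrite le_eqVlt => /orP[/eqP-> //|xy] y1.
exact/ltW/acos_ltr.
Qed.

Lemma acos_lt_near1 (e : R) : 0 < e ->
  exists c, [/\ -1 <= c, c < 1 & forall x, c < x -> x <= 1 -> acos x < e].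
Proof.
move=> e0; pose t := Num.min e pi.
have t0 : 0 < t by rewrite lt_min e0 pi_gt0.
have t_itv : t \in `[0, pi] by rewrite in_itv /= ltW // ge_min lexx orbT.
exists (cos t); split; rewrite ?cos_geN1 //.
  rewrite lt_neqAle cos_le1 andbT; apply: contraTneq t0 => cos1.
  by rewrite -(cosK t_itv) cos1 acos1 ltxx.
move=> x tx x1; apply: lt_le_trans (acos_ltr (cos_geN1 t) tx x1) _.
by rewrite cosK // ge_min lexx.
Qed.

End Arccos.

Section FubiniStudyDistance.
Variables (R : realType) (m : nat).
Implicit Types (x y : 'rV[R[i]]_m).

Lemma dFS_ge0 x y : x != 0 -> y != 0 -> 0 <= dFS x y.
Proof. by move=> x0 y0; rewrite dFSE acos_ge0 // cosFS_itv. Qed.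

Lemma dFSC x y : dFS x y = dFS y x.
Proof. by rewrite !dFSE cosFSC. Qed.

Lemma cosFS_gt x y (c : R) :
  x != 0 -> y != 0 -> c <= 1 -> dFS x y < acos c -> c < cosFS x y.
Proof.
move=> x0 y0 c1 xy; rewrite ltNge; apply: contraTN xy => cos_le.
have /andP[cos_ge cos_le1] := cosFS_itv x0 y0.
by rewrite -leNgt dFSE acos_ler.
Qed.

Definition perturb_angle (s : R) := acos ((1 - s) / (1 + s)).

Lemma dFS_le_perturb x y s : x != 0 -> 0 <= s < 1 -> vnorm (x - y) <= s * vnorm x ->
  y != 0 /\ dFS x y <= perturb_angle s.
Proof.
move=> x0 s_itv xy; have [y0 cos_ge] := cosFS_ge_perturb x0 s_itv xy.
split => //; rewrite dFSE; apply: acos_ler cos_ge (cosFS_le1 x0 y0).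
case/andP: s_itv => s0 s1; apply: le_trans (lerN10 R) _.
by rewrite divr_ge0 //; lra.
Qed.

Lemma perturb_angle_lt (e : R) (p : nat) : 0 < e -> exists2 tau : R, 0 < tau &
  [/\ tau <= 1, p.+1%:R * tau < 1 & perturb_angle (p.+1%:R * tau) < e].
Proof.
move=> e0; have [c [c1 c_lt1 acos_lt]] := acos_lt_near1 e0.
set s := (1 - c) / 4.
have s0 : 0 < s by rewrite /s divr_gt0 // subr_gt0.
have s4 : 4 * s = 1 - c by rewrite /s mulrC divfK.
have p0 : (0 : R) < p.+1%:R by rewrite ltr0n.
have p1 : (1 : R) <= p.+1%:R by rewrite ler1n.
have ps : p.+1%:R * (s / p.+1%:R) = s by rewrite mulrC divfK // gt_eqF.
exists (s / p.+1%:R); first by rewrite divr_gt0.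
rewrite ps; split; [by rewrite ler_pdivrMr //; nra | lra |].
(* [(1 - s) / (1 + s) > c] because [s (1 + c) < 1 - c]. *)
apply: acos_lt; last by rewrite ler_pdivrMr ?mul1r; lra.
rewrite ltr_pdivlMr; last lra.
have : 0 < (1 - c) * (3 - c) by rewrite mulr_gt0 //; lra.
nra.
Qed.

End FubiniStudyDistance.

Section OrthonormalFrame.
Variables (R : realType) (m p : nat).
Implicit Types (y : 'rV[R[i]]_m) (c : 'I_p -> R[i]) (F : 'I_p -> 'rV[R[i]]_m).

Definition orthonormal (F : 'I_p -> 'rV[R[i]]_m) :=
  forall i j, hprod (F i) (F j) = (i == j)%:R.

Definition frame_span (F : 'I_p -> 'rV[R[i]]_m) : {vspace 'rV[R[i]]_m} :=
  <<[tuple F i | i < p]>>%VS.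

Lemma frame_span_sum F c : \sum_i c i *: F i \in frame_span F.
Proof.
apply: memv_suml => i _; apply/memvZ/memv_span.
by rewrite -tnth_mktuple mem_tnth.
Qed.

Lemma frame_span_mem F i : F i \in frame_span F.
Proof. by rewrite -tnth_mktuple; apply: memv_span; rewrite mem_tnth. Qed.

Lemma frame_spanP F y : y \in frame_span F ->
  exists c, y = \sum_i c i *: F i.
Proof.
move=> /coord_span ->; exists (fun i => coord [tuple F i | i < p] i y).
by apply: eq_bigr => i _; rewrite nth_mktuple.
Qed.

Lemma frame_freeP F :
  (forall c, \sum_i c i *: F i = 0 -> forall i, c i = 0) -> free [tuple F i | i < p].
Proof.
move=> F_indep; apply/freeP => c c_eq0; apply: F_indep.
by rewrite -[RHS]c_eq0; apply: eq_bigr => j _; rewrite nth_mktuple.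
Qed.

Lemma dim_frame_span F : free [tuple F i | i < p] -> \dim (frame_span F) = p.
Proof. by rewrite /free size_tuple => /eqP. Qed.

Variable F : 'I_p -> 'rV[R[i]]_m.
Hypothesis F_on : orthonormal F.

Lemma orthonormal_vnorm i : vnorm (F i) = 1.
Proof.
apply/eqP; rewrite -(@eqrXn2 _ 2) ?vnorm_ge0 ?ler01 // expr1n.
by apply/eqP/complexI; rewrite -hprodxx F_on eqxx.
Qed.

Lemma orthonormal_neq0 i : F i != 0.
Proof. by apply: contra_neq (@oner_neq0 R) => Fi0; rewrite -(orthonormal_vnorm i) Fi0 vnorm0. Qed.

Lemma hprod_frame c j : hprod (\sum_i c i *: F i) (F j) = c j.
Proof.
rewrite hprod_suml (bigD1 j) //= big1 ?addr0 => [|i ij]; first by rewrite hprodZl F_on eqxx mulr1.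
by rewrite hprodZl F_on (negbTE ij) mulr0.
Qed.

Lemma vnorm_frame_sqr c : vnorm (\sum_i c i *: F i) ^+ 2 = \sum_i normc (c i) ^+ 2.
Proof.
apply: complexI; rewrite -hprodxx rmorph_sum /= {1}hprod_suml.
by apply: eq_bigr => i _; rewrite hprodZl -conj_hprod hprod_frame mulc_conj.
Qed.

Lemma normc_coef_le c j : normc (c j) <= vnorm (\sum_i c i *: F i).
Proof.
rewrite -{1}(hprod_frame c j); apply: le_trans (normc_hprod_le _ _) _.
by rewrite orthonormal_vnorm mulr1.
Qed.

Lemma frame_span_expand y : y \in frame_span F -> y = \sum_i hprod y (F i) *: F i.
Proof.
move=> /frame_spanP[c ->]; apply: eq_bigr => i _.
by rewrite hprod_frame.
Qed.

Lemma orthonormal_free : free [tuple F i | i < p].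
Proof. by apply: frame_freeP => c c0 i; rewrite -(hprod_frame c i) c0 hprod0l. Qed.

End OrthonormalFrame.

Section GramSchmidt.
Variables (R : realType) (m : nat).
Implicit Types (a x y : 'rV[R[i]]_m) (s t : seq 'rV[R[i]]_m).

Definition orthonormal_seq t :=
  uniq t /\ {in t &, forall a b, hprod a b = (a == b)%:R}.

(* The new vector is [x] minus its projection onto the span of the previous ones, normalised. *)
Lemma gram_schmidt s : free s ->
  exists t, [/\ size t = size s, span t = span s & orthonormal_seq t].
Proof.
elim: s => [_|x s IH]; first by exists [::]; split => //; split => // a b.
rewrite free_cons => /andP[x_notin /IH [t [st span_t [t_uniq t_on]]]].
pose z := \sum_(y <- t) hprod x y *: y.
have z_span : z \in <<t>>%VS.
  by rewrite /z big_seq; apply: memv_suml => y yt; apply/memvZ/memv_span.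
have hprod_z a : a \in t -> hprod z a = hprod x a.
  move=> at_; rewrite /z hprod_suml (bigD1_seq a) //= big1_seq ?addr0.
    by rewrite hprodZl (t_on a a) // eqxx mulr1.
  by move=> y /andP[ya yt]; rewrite hprodZl (t_on y a) // (negbTE ya) mulr0.
pose r := x - z.
have r0 : r != 0.
  by apply: contraNneq x_notin => /eqP; rewrite subr_eq0 => /eqP->; rewrite -span_t.
have nr := vnorm_gt0 r0.
pose f := normalize r.
have hprod_f a : a \in t -> hprod f a = 0.
  by move=> at_; rewrite /f /normalize hprodZl hprodBl hprod_z // subrr mulr0.
have hprod_f' a : a \in t -> hprod a f = 0.
  by move=> at_; rewrite -conj_hprod hprod_f // conjc0.
have hprod_ff : hprod f f = 1 by rewrite hprodxx vnorm_normalize // expr1n.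
have f_notin : f \notin t.
  by apply/negP => /hprod_f; rewrite hprod_ff => /eqP; rewrite oner_eq0.
have x_eq : x = (vnorm r)%:C *: f + z.
  by rewrite /f /normalize scalerA -rmorphM divff ?gt_eqF // scale1r subrK.
exists (f :: t); split; first by rewrite /= st.
- rewrite !span_cons -span_t; apply/subv_anti/andP; split; rewrite subv_add addvSr andbT -memvE.
    rewrite /f /normalize /r; apply/memvZ/memvB; last exact: (subvP (addvSr _ _)).
    exact: (subvP (addvSl _ _)) (memv_line x).
  by rewrite x_eq; apply: memv_add => //; apply/memvZ/memv_line.
- split; first by rewrite /= f_notin t_uniq.
  move=> a b; rewrite !inE => /orP[/eqP->|at_] /orP[/eqP->|bt].
  + by rewrite hprod_ff eqxx.
  + by rewrite hprod_f //; case: eqP => // fb; rewrite fb bt in f_notin.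
  + by rewrite hprod_f' //; case: eqP => // af; rewrite -af at_ in f_notin.
  + exact: t_on.
Qed.

Lemma exists_orthonormal_frame d (L : {vspace 'rV[R[i]]_m}) : \dim L = d ->
  exists F : 'I_d -> 'rV[R[i]]_m, orthonormal F /\ frame_span F = L.
Proof.
move=> <-; have basis_L := vbasisP L.
have [t [st span_t [t_uniq t_on]]] := gram_schmidt (basis_free basis_L).
rewrite size_tuple in st.
exists (fun i => t`_i); have F_on : orthonormal (fun i : 'I_(\dim L) => t`_i).
  by move=> i j; rewrite t_on ?mem_nth ?st // nth_uniq ?st.
split => //; apply/eqP; rewrite eqEdim dim_frame_span ?orthonormal_free // leqnn andbT.
rewrite -[X in (_ <= X)%VS](span_basis basis_L) -span_t.
by apply/span_subvP => y /mapP [i _ ->]; rewrite memv_span // mem_nth ?st.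
Qed.

End GramSchmidt.

Section Hausdorff.
Variables (R : realType) (m : nat).
Implicit Types (x y : 'rV[R[i]]_m) (L M : {vspace 'rV[R[i]]_m}).

Lemma dist_pt_le x y M : x != 0 -> y \in M -> y != 0 -> dist_pt x M <= dFS x y.
Proof.
move=> x0 yM y0; apply: ge_inf; last by exists y.
by exists 0 => _ [z [zM z0] <-]; exact: dFS_ge0.
Qed.

Lemma dHaus_le L M (e : R) :
  (exists x, x \in L /\ x != 0) -> (exists y, y \in M /\ y != 0) ->
  (forall x, x \in L -> x != 0 -> exists y, [/\ y \in M, y != 0 & dFS x y <= e]) ->
  (forall y, y \in M -> y != 0 -> exists x, [/\ x \in L, x != 0 & dFS y x <= e]) ->
  dHaus L M <= e.
Proof.
move=> [x0 [x0L x0n]] [y0 [y0M y0n]] LM ML.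
rewrite /dHaus ge_max; apply/andP; split; apply: ge_sup.
- by exists (dist_pt x0 M), x0.
- move=> _ [x [xL xn] <-]; have [y [yM yn xy]] := LM x xL xn.
  exact: le_trans (dist_pt_le xn yM yn) xy.
- by exists (dist_pt y0 L), y0.
- move=> _ [y [yM yn] <-]; have [x [xL xn yx]] := ML y yM yn.
  exact: le_trans (dist_pt_le yn xL xn) yx.
Qed.

End Hausdorff.

Section FramePerturbation.
Variables (R : realType) (m p : nat).
Variables (F G : 'I_p -> 'rV[R[i]]_m) (tau : R).
Hypotheses (F_on : orthonormal F) (tau0 : 0 <= tau)
  (GF : forall i, vnorm (G i - F i) <= tau) (p_tau : p%:R * tau < 1).

Let s_itv : 0 <= p%:R * tau < 1.
Proof. by rewrite p_tau andbT mulr_ge0. Qed.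

Lemma vnorm_frame_perturb (c : 'I_p -> R[i]) :
  vnorm (\sum_i c i *: F i - \sum_i c i *: G i) <= p%:R * tau * vnorm (\sum_i c i *: F i).
Proof.
rewrite -sumrB; apply: le_trans (vnorm_sum _ _ _) _.
have -> : p%:R * tau * vnorm (\sum_i c i *: F i) = \sum_(i < p) vnorm (\sum_i c i *: F i) * tau.
  by rewrite sumr_const card_ord -mulr_natl; ring.
apply: ler_sum => i _; rewrite -scalerBr vnormZ vnormB_sym.
by apply: ler_pM; rewrite ?normc_ge0 ?vnorm_ge0 ?normc_coef_le.
Qed.

Lemma perturbed_frame_zero (c : 'I_p -> R[i]) :
  \sum_i c i *: G i = 0 -> \sum_i c i *: F i = 0.
Proof.
move=> G0; have := vnorm_frame_perturb c; rewrite G0 subr0 => le_s.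
apply: vnorm_eq0; apply/eqP; rewrite eq_le vnorm_ge0 andbT.
have := vnorm_ge0 (\sum_i c i *: F i); case/andP: s_itv => ? ?; nra.
Qed.

Lemma dim_perturbed_span : \dim (frame_span G) = p.
Proof.
apply/dim_frame_span/frame_freeP => c /perturbed_frame_zero F0 i.
by rewrite -(hprod_frame F_on c i) F0 hprod0l.
Qed.

Lemma dHaus_perturbed_span : (0 < p)%N ->
  dHaus (frame_span F) (frame_span G) <= perturb_angle (p%:R * tau).
Proof.
move=> p0; pose i0 := Ordinal p0.
have near_G x : x \in frame_span F -> x != 0 ->
    exists y, [/\ y \in frame_span G, y != 0 & dFS x y <= perturb_angle (p%:R * tau)].
  move=> xF x0; rewrite (frame_span_expand F_on xF) in x0 *.
  have [y0 xy] := dFS_le_perturb x0 s_itv (vnorm_frame_perturb _).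
  by exists (\sum_i hprod x (F i) *: G i); split => //; exact: frame_span_sum.
apply: dHaus_le => //.
- by exists (F i0); split; [exact: frame_span_mem | exact: orthonormal_neq0].
- have [y [? ? _]] := near_G _ (frame_span_mem F i0) (orthonormal_neq0 F_on i0).
  by exists y.
move=> y /frame_spanP[c ->] y0; exists (\sum_i c i *: F i).
have x0 : \sum_i c i *: F i != 0.
  apply: contra_neq y0 => F0; have := vnorm_frame_perturb c.
  rewrite F0 vnorm0 mulr0 sub0r vnormN => le0.
  by apply/vnorm_eq0/eqP; rewrite eq_le le0 vnorm_ge0.
have [_ xy] := dFS_le_perturb x0 s_itv (vnorm_frame_perturb c).
by split => //; [exact: frame_span_sum | rewrite dFSC].
Qed.

End FramePerturbation.

Section FrameRotation.
Variables (R : realType) (m : nat).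
Implicit Types (u v w : 'rV[R[i]]_m).

(* Rotating [w] by the phase of [<w, v>] makes the inner product real, equal to the cosine. *)
Lemma align_phase v w : v != 0 -> w != 0 -> 0 < cosFS v w ->
  exists2 a, a != 0 & vnorm (a *: w - normalize v) ^+ 2 = 2 - 2 * cosFS v w.
Proof.
move=> v0 w0 cos_gt0; have nv := vnorm_gt0 v0; have nw := vnorm_gt0 w0.
set u := normalize v; set q := hprod w u.
have normc_q : normc q = cosFS v w * vnorm w.
  rewrite /q /u /normalize hprodZr ComplexField.Normc.normcM normc_conj normc_real.
  by rewrite ger0_norm ?invr_ge0 ?vnorm_ge0 // /cosFS normc_hprodC; field; rewrite !gt_eqF.
have q_gt0 : 0 < normc q by rewrite normc_q mulr_gt0.
have qw0 : (normc q * vnorm w)%:C != 0 by rewrite (inj_eq (@complexI _)) gt_eqF ?mulr_gt0.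
set a := conjc q / (normc q * vnorm w)%:C.
exists a.
  rewrite mulf_eq0 invr_eq0 negb_or qw0 andbT conjc_eq0.
  by apply: contraTneq q_gt0 => ->; rewrite ComplexField.Normc.normc0 ltxx.
have unit_aw : vnorm (a *: w) = 1.
  rewrite vnormZ ComplexField.Normc.normcM normc_conj ComplexField.Normc.normcV normc_real.
  by rewrite ger0_norm ?mulr_ge0 ?normc_ge0 ?vnorm_ge0 //; field; rewrite !gt_eqF.
have hprod_aw : hprod (a *: w) u = (cosFS v w)%:C.
  rewrite hprodZl -/q mulrAC [conjc q * q]mulrC mulc_conj.
  rewrite -(fmorphV (real_complex R)) -rmorphM; congr (_%:C).
  by rewrite normc_q; field; rewrite !gt_eqF.
by rewrite vnormB_sqr unit_aw vnorm_normalize // hprod_aw /=; ring.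
Qed.

Variable p : nat.
Variables (F : 'I_p -> 'rV[R[i]]_m) (u w : 'rV[R[i]]_m).
Hypotheses (F_on : orthonormal F) (uF : u \in frame_span F) (unit_u : vnorm u = 1).

(* [F] moved by the linear map [x |-> x + <x, u> (w - u)], which sends [u] to [w]. *)
Definition rotated_frame i := F i + hprod (F i) u *: (w - u).

Lemma rotated_frame_near i : vnorm (rotated_frame i - F i) <= vnorm (w - u).
Proof.
rewrite /rotated_frame addrC addKr vnormZ ler_piMl ?vnorm_ge0 //.
by apply: le_trans (normc_hprod_le _ _) _; rewrite orthonormal_vnorm // unit_u mulr1.
Qed.

Lemma rotated_frame_span : w \in frame_span rotated_frame.
Proof.
have coef_sum : \sum_i hprod u (F i) * hprod (F i) u = 1.
  transitivity ((vnorm u ^+ 2)%:C); last by rewrite unit_u expr1n.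
  rewrite [X in vnorm X](frame_span_expand F_on uF) vnorm_frame_sqr // rmorph_sum.
  apply: eq_bigr => i _.
  by rewrite -[hprod (F i) u]conj_hprod mulc_conj.
suff <- : \sum_i hprod u (F i) *: rotated_frame i = w by exact: frame_span_sum.
rewrite /rotated_frame; under eq_bigr do rewrite scalerDr scalerA.
rewrite big_split /= -(frame_span_expand F_on uF) -scaler_suml coef_sum.
by rewrite scale1r addrC subrK.
Qed.

End FrameRotation.

Lemma Gr_union_open (R : realType) (k n : nat) (U : set {vspace 'rV[R[i]]_n.+1}) :
  (forall L, U L -> isGr R k n L) -> Gr_open R k n U -> PS_open (Gr_union U).
Proof.
move=> UGr U_open v [v0 [L UL vL]].
have [eps eps0 U_ball] := U_open L UL.
have [F [F_on spanF]] := exists_orthonormal_frame (UGr L UL).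
have [tau tau0 [tau1 k_tau angle_lt]] := perturb_angle_lt k eps0.
set t := tau ^+ 2 / 2.
have t_itv : 0 < t < 1.
  by rewrite divr_gt0 ?exprn_gt0 //= ltr_pdivrMr // mul1r; nra.
exists (acos (1 - t)); first by rewrite acos_gt0 //; case/andP: t_itv => ? ?; lra.
move=> w w0 vw; case/andP: t_itv => t0 t1.
have cos_gt : 1 - t < cosFS v w by apply: cosFS_gt vw => //; lra.
have [a a0 aw] : exists2 a, a != 0 & vnorm (a *: w - normalize v) ^+ 2 = 2 - 2 * cosFS v w.
  by apply: align_phase => //; lra.
set u := normalize v in aw; set wa := a *: w in aw.
have uF : u \in frame_span F by rewrite spanF; apply: memvZ.
have unit_u : vnorm u = 1 by exact: vnorm_normalize.
have wa_near : vnorm (wa - u) <= tau.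
  rewrite -(@ler_pXn2r _ 2) ?nnegrE ?vnorm_ge0 ?(ltW tau0) // aw.
  have : tau ^+ 2 = 2 * t by rewrite /t; field.
  lra.
have G_near i : vnorm (rotated_frame F u wa i - F i) <= tau.
  by apply: le_trans wa_near; exact: rotated_frame_near.
have UG : U (frame_span (rotated_frame F u wa)).
  apply: U_ball; first exact: dim_perturbed_span F_on (ltW tau0) G_near k_tau.
  rewrite -spanF; apply: le_lt_trans angle_lt.
  exact: dHaus_perturbed_span F_on (ltW tau0) G_near k_tau (ltn0Sn k).
split => //; exists (frame_span (rotated_frame F u wa)) => //.
have -> : w = a^-1 *: wa by rewrite /wa scalerA mulVf // scale1r.
exact/memvZ/rotated_frame_span.
Qed.

Section Bessel.
Variables (R : realType) (m p : nat).
Implicit Types (w y : 'rV[R[i]]_m) (G : 'I_p -> 'rV[R[i]]_m).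

Definition bessel_sum w G := \sum_i normc (hprod w (G i)) ^+ 2.

Lemma bessel_sum_ge0 w G : 0 <= bessel_sum w G.
Proof. by apply: sumr_ge0 => i _; rewrite sqr_ge0. Qed.

Lemma normc_hprod_frame_span_le G w y : orthonormal G -> y \in frame_span G ->
  normc (hprod w y) ^+ 2 <= bessel_sum w G * vnorm y ^+ 2.
Proof.
move=> G_on yG; rewrite (frame_span_expand G_on yG) hprod_sumr vnorm_frame_sqr //.
have coords_w : bessel_sum w G = vnorm (\row_i hprod w (G i)) ^+ 2.
  by rewrite vnorm_sqr; apply: eq_bigr => i _; rewrite mxE.
have coords_y : \sum_i normc (hprod y (G i)) ^+ 2 = vnorm (\row_i hprod y (G i)) ^+ 2.
  by rewrite vnorm_sqr; apply: eq_bigr => i _; rewrite mxE.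
have -> : \sum_i hprod w (hprod y (G i) *: G i) =
    hprod (\row_i hprod w (G i)) (\row_i hprod y (G i)).
  by apply: eq_bigr => i _; rewrite hprodZr !mxE mulrC.
rewrite coords_w coords_y -exprMn ler_pXn2r ?nnegrE ?normc_ge0 ?mulr_ge0 ?vnorm_ge0 //.
exact: normc_hprod_le.
Qed.

Lemma cosFS_sqr_le_bessel G w y :
  orthonormal G -> y \in frame_span G -> w != 0 -> y != 0 ->
  cosFS w y ^+ 2 <= bessel_sum w G / vnorm w ^+ 2.
Proof.
move=> G_on yG w0 y0; have nw := vnorm_gt0 w0; have ny := vnorm_gt0 y0.
rewrite /cosFS expr_div_n exprMn ler_pdivrMr ?mulr_gt0 ?exprn_gt0 //.
rewrite mulrA divfK ?gt_eqF ?exprn_gt0 //.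
exact: normc_hprod_frame_span_le.
Qed.

Lemma bessel_sum_lt G w : orthonormal G -> w \notin frame_span G ->
  bessel_sum w G < vnorm w ^+ 2.
Proof.
move=> G_on wG; set z := \sum_i hprod w (G i) *: G i; set r := w - z.
have hprod_rz : hprod r z = 0.
  rewrite /z hprod_sumr big1 // => i _.
  by rewrite hprodZr /r hprodBl hprod_frame // subrr mulr0.
have r0 : r != 0.
  by apply: contraNneq wG => /eqP; rewrite subr_eq0 => /eqP ->; exact: frame_span_sum.
have -> : vnorm w = vnorm (r + z) by rewrite /r subrK.
rewrite vnormD_sqr hprod_rz /= mulr0 addr0.
by rewrite vnorm_frame_sqr // addrC ltrDl exprn_gt0 // vnorm_gt0.
Qed.

Lemma bessel_sum_perturb F G w tau : orthonormal F -> 0 <= tau <= 1 ->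
  (forall i, vnorm (G i - F i) <= tau) ->
  bessel_sum w G <= bessel_sum w F + p%:R * (3 * tau * vnorm w ^+ 2).
Proof.
move=> F_on /andP[t0 t1] GF.
have -> : bessel_sum w F + p%:R * (3 * tau * vnorm w ^+ 2) =
    \sum_i (normc (hprod w (F i)) ^+ 2 + 3 * tau * vnorm w ^+ 2).
  by rewrite big_split /= sumr_const card_ord mulr_natl.
apply: ler_sum => i _; have nw := vnorm_ge0 w.
have wF : normc (hprod w (F i)) <= vnorm w.
  by apply: le_trans (normc_hprod_le _ _) _; rewrite orthonormal_vnorm // mulr1.
have wG : normc (hprod w (G i)) <= normc (hprod w (F i)) + vnorm w * tau.
  rewrite -[G i](subrK (F i)) hprodDr addrC.
  apply: le_trans (le_normcD _ _) _; rewrite lerD2l.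
  by apply: le_trans (normc_hprod_le _ _) _; apply: ler_wpM2l.
have wG2 : normc (hprod w (G i)) ^+ 2 <= (normc (hprod w (F i)) + vnorm w * tau) ^+ 2.
  by rewrite ler_pXn2r ?nnegrE ?normc_ge0 // addr_ge0 ?normc_ge0 // mulr_ge0.
have : vnorm w * tau * (vnorm w * tau) <= vnorm w * tau * vnorm w.
  by apply: ler_wpM2l; rewrite ?mulr_ge0 // -[X in _ <= X]mulr1 ler_wpM2l.
have : normc (hprod w (F i)) * (vnorm w * tau) <= vnorm w * (vnorm w * tau).
  by apply: ler_wpM2r; rewrite ?mulr_ge0.
have := normc_ge0 (hprod w (F i)); nra.
Qed.

End Bessel.

Lemma exists_small_pos (R : realType) (a b : R) : 0 < a -> 0 < b ->
  exists2 tau : R, 0 < tau & tau <= 1 /\ tau * a <= b.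
Proof.
move=> a0 b0; exists (Num.min 1 (b / a)); first by rewrite lt_min ltr01 divr_gt0.
split; first by rewrite ge_min lexx.
by rewrite -ler_pdivlMr // ge_min lexx orbT.
Qed.

Lemma not_orthonormal_near (R : realType) (m p : nat) (G0 : 'I_p -> 'rV[R[i]]_m) :
  ~ orthonormal G0 -> exists2 tau : R, 0 < tau &
    forall G, (forall i, vnorm (G i - G0 i) <= tau) -> ~ orthonormal G.
Proof.
move=> G0_on; have [i [j ij]] : exists i j, hprod (G0 i) (G0 j) != (i == j)%:R.
  apply: contrapT => h; apply: G0_on => i j; apply/eqP; apply: contrapT => ij.
  by apply: h; exists i, j; apply/negP.
set d := normc (hprod (G0 i) (G0 j) - (i == j)%:R).
have d0 : 0 < d.
  rewrite lt_def normc_ge0 andbT; apply: contra ij => /eqP/ComplexField.Normc.eq0_normc.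
  by move/eqP; rewrite subr_eq0.
set A := vnorm (G0 i) + vnorm (G0 j) + 1.
have A0 : 0 < A by rewrite /A ltr_pwDr // addr_ge0 // vnorm_ge0.
have [tau tau0 [tau1 tauA]] := exists_small_pos A0 (divr_gt0 d0 (ltr0n R 2)).
exists tau => // G GG0 G_on.
have nGj : vnorm (G j) <= vnorm (G0 j) + tau.
  by rewrite -[G j](subrK (G0 j)) addrC; apply: le_trans (vnormD _ _) _; rewrite lerD2l.
have : normc (hprod (G i) (G j) - hprod (G0 i) (G0 j)) <= tau * A.
  have -> : hprod (G i) (G j) - hprod (G0 i) (G0 j) =
      hprod (G i - G0 i) (G j) + hprod (G0 i) (G j - G0 j).
    by rewrite hprodBl hprodBr addrA subrK.
  apply: le_trans (le_normcD _ _) _.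
  have := normc_hprod_le (G i - G0 i) (G j); have := normc_hprod_le (G0 i) (G j - G0 j).
  have : vnorm (G i - G0 i) * vnorm (G j) <= tau * (vnorm (G0 j) + tau).
    by apply: ler_pM; rewrite ?vnorm_ge0.
  have : vnorm (G0 i) * vnorm (G j - G0 j) <= vnorm (G0 i) * tau.
    by apply: ler_wpM2l; rewrite ?vnorm_ge0.
  by rewrite /A; nra.
by rewrite G_on -opprB normcN -/d; lra.
Qed.

Import numFieldTopology.Exports.
Import ArrowAsProduct.
Local Open Scope classical_set_scope.

Section FrameCoordinates.
Variables (R : realType) (p m : nat).
Local Notation coords := ('I_p * 'I_m * bool -> R).

Definition frame_of (f : coords) : 'I_p -> 'rV[R[i]]_m :=
  fun i => \row_j (f (i, j, false) +i* f (i, j, true)).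

Definition coords_of (F : 'I_p -> 'rV[R[i]]_m) : coords := fun x =>
  if x.2 then complex.Im (F x.1.1 ord0 x.1.2) else complex.Re (F x.1.1 ord0 x.1.2).

Lemma coords_ofK F : frame_of (coords_of F) = F.
Proof. by apply: funext => i; apply/rowP => j; rewrite mxE /coords_of /=; case: (F i ord0 j). Qed.

Definition unit_box : set coords := [set f | forall x, `[-1, 1]%classic (f x)].

Lemma unit_box_compact : compact unit_box.
Proof.
exact: (@tychonoff _ (fun _ => R) (fun _ => `[-1, 1]%classic)
  (fun _ => @segment_compact R (-1) 1)).
Qed.

Lemma coords_of_orthonormal F : orthonormal F -> unit_box (coords_of F).
Proof.
move=> F_on [[i j] b]; rewrite /= in_itv /= -ler_norml /coords_of /=.
have := normc_coord_le (F i) j; rewrite orthonormal_vnorm //.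
by case: b => /=; apply: le_trans; [exact: normc_ge_Im | exact: normc_ge_Re].
Qed.

Lemma near_frame_of (f0 : coords) (tau : R) : 0 < tau ->
  \forall f \near f0, forall i, vnorm (frame_of f i - frame_of f0 i) <= tau.
Proof.
move=> tau0; pose rho := tau / m.+1%:R.
have rho0 : 0 < rho by rewrite divr_gt0.
have coord_near x : \forall f \near f0, `|f x - f0 x| < rho.
  apply: (@proj_continuous _ (fun _ => R) x f0 [set r | `|r - f0 x| < rho]).
  by apply/nbhs_ballP; exists rho => //= r; rewrite /ball /= distrC.
apply: filterS (filter_forall _ coord_near) => f f_near i.
rewrite -(@ler_pXn2r _ 2) ?nnegrE ?vnorm_ge0 ?(ltW tau0) // vnorm_sqr.
have sqr_lt x : (f x - f0 x) ^+ 2 <= rho ^+ 2.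
  rewrite -real_normK ?num_real // ler_pXn2r ?nnegrE ?(ltW rho0) //; exact/ltW/f_near.
have sum_le : \sum_(j < m) normc ((frame_of f i - frame_of f0 i) ord0 j) ^+ 2 <=
    \sum_(j < m) 2 * rho ^+ 2.
  apply: ler_sum => j _; rewrite normc_sqr !mxE /=.
  by have := sqr_lt (i, j, false); have := sqr_lt (i, j, true); lra.
apply: le_trans sum_le _.
rewrite sumr_const card_ord -[X in X <= _]mulr_natl /rho.
have -> : m.+1%:R = m%:R + 1 :> R by rewrite natr1.
set M : R := m%:R.
have M0 : 0 <= M by exact: ler0n.
have -> : M * (2 * (tau / (M + 1)) ^+ 2) = 2 * M / (M + 1) ^+ 2 * tau ^+ 2.
  by field; rewrite gt_eqF //; lra.
rewrite ler_piMl ?sqr_ge0 // ler_pdivrMr ?exprn_gt0 ?mul1r; nra.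
Qed.

End FrameCoordinates.

Section ClosedCase.
Variables (R : realType) (k n : nat) (U : set {vspace 'rV[R[i]]_n.+1}).
Variables (w : 'rV[R[i]]_n.+1) (w0 : w != 0).
Local Notation coords := ('I_k.+1 * 'I_n.+1 * bool -> R).
Local Notation frame := (@frame_of R k.+1 n.+1).

Definition far_from (e : R) (f : coords) : Prop :=
  orthonormal (frame f) -> U (frame_span (frame f)) ->
  forall y, y \in frame_span (frame f) -> y != 0 -> e <= dFS w y.

Lemma far_near_not_orthonormal f0 : ~ orthonormal (frame f0) ->
  \forall f \near f0 & e \near (0 : R)^'+, far_from e f.
Proof.
move=> f0_on; have [tau tau0 not_on] := not_orthonormal_near f0_on.
apply: (filter_pair_set _ _ _ (conj (near_frame_of f0 tau0) filterT)) => f e f_near _ f_on.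
by have := not_on _ f_near.
Qed.

(* Bessel's inequality is strict at [f0] and continuous in the frame, so the cosine
   of the angle between [w] and the spans of nearby frames stays bounded away from 1. *)
Lemma far_near_notin_span f0 : orthonormal (frame f0) -> w \notin frame_span (frame f0) ->
  \forall f \near f0 & e \near (0 : R)^'+, far_from e f.
Proof.
move=> f0_on wF0; have nw := exprn_gt0 2 (vnorm_gt0 w0).
set d := vnorm w ^+ 2 - bessel_sum w (frame f0).
have d0 : 0 < d by rewrite subr_gt0 bessel_sum_lt.
have [tau tau0 [tau1 tau_d]] :=
  exists_small_pos (mulr_gt0 (ltr0n R k.+1) (mulr_gt0 (ltr0n R 3) nw)) (divr_gt0 d0 (ltr0n R 2)).
set th := (bessel_sum w (frame f0) + d / 2) / vnorm w ^+ 2.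
have th0 : 0 <= th.
  by rewrite divr_ge0 ?addr_ge0 ?bessel_sum_ge0 ?divr_ge0 ?(ltW d0) ?(ltW nw).
have th1 : Num.sqrt th < 1.
  by rewrite -sqrtr1 ltr_sqrt // ltr_pdivrMr // mul1r; move: d0; rewrite /d; lra.
have angle_gt0 : 0 < acos (Num.sqrt th).
  by rewrite acos_gt0 // th1 (le_trans (lerN10 R)) ?sqrtr_ge0.
apply: (filter_pair_set _ _ _ (conj (near_frame_of f0 tau0) (nbhs_right_lt angle_gt0))).
move=> f e f_near e_lt f_on _ y yF y0.
have bessel_le : bessel_sum w (frame f) <= th * vnorm w ^+ 2.
  rewrite divfK ?gt_eqF //; apply: le_trans (bessel_sum_perturb _ f0_on _ f_near) _.
    by rewrite (ltW tau0).
  have -> : k.+1%:R * (3 * tau * vnorm w ^+ 2) = tau * (k.+1%:R * (3 * vnorm w ^+ 2)).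
    by ring.
  by rewrite lerD2l.
have cos_le : cosFS w y <= Num.sqrt th.
  rewrite -[cosFS w y]ger0_norm ?cosFS_ge0 // -sqrtr_sqr ler_sqrt //.
  apply: le_trans (cosFS_sqr_le_bessel f_on yF w0 y0) _.
  by rewrite ler_pdivrMr.
have /andP[cos_ge cos_le1] := cosFS_itv w0 y0.
by apply/ltW/(lt_le_trans e_lt); rewrite dFSE acos_ler // (ltW th1).
Qed.

Lemma far_near_notin_U f0 : Gr_closed R k n U ->
  orthonormal (frame f0) -> ~ U (frame_span (frame f0)) ->
  \forall f \near f0 & e \near (0 : R)^'+, far_from e f.
Proof.
move=> U_closed f0_on f0_U.
have L0_Gr : isGr R k n (frame_span (frame f0)).
  exact/dim_frame_span/orthonormal_free.
have [eps eps0 notU_ball] := U_closed _ (conj L0_Gr f0_U).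
have [tau tau0 [_ k_tau angle_lt]] := perturb_angle_lt k eps0.
apply: (filter_pair_set _ _ _ (conj (near_frame_of f0 tau0) filterT)) => f e f_near _ _ fU.
have dHaus_lt := le_lt_trans (dHaus_perturbed_span f0_on (ltW tau0) f_near k_tau (ltn0Sn k)) angle_lt.
by have [_ []] := notU_ball _ (dim_perturbed_span f0_on (ltW tau0) f_near k_tau) dHaus_lt.
Qed.

End ClosedCase.

Lemma Gr_union_closed (R : realType) (k n : nat) (U : set {vspace 'rV[R[i]]_n.+1}) :
  (forall L, U L -> isGr R k n L) -> Gr_closed R k n U -> PS_closed (Gr_union U).
Proof.
move=> UGr U_closed w [w0 w_notin].
have far_loc (f0 : 'I_k.+1 * 'I_n.+1 * bool -> R) : unit_box f0 ->
    \forall f \near f0 & e \near (0 : R)^'+, far_from U w e f.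
  move=> _; have [f0_on|] := pselect (orthonormal (frame_of f0)); last first.
    exact: far_near_not_orthonormal.
  have [f0_U|] := pselect (U (frame_span (frame_of f0))); last exact: far_near_notin_U.
  apply: far_near_notin_span => //; apply/negP => wF0.
  by apply: w_notin; split => //; exists (frame_span (frame_of f0)).
have near_e := (compact_near_coveringP _).1 (@unit_box_compact R _ _) _ _ _ _ far_loc.
have [e [box_far e0]] := filter_ex (filterI (near_e _) (nbhs_right_gt 0)).
exists e => // y y0 ye; split => //; case => _ [L UL yL].
have [F [F_on spanF]] := exists_orthonormal_frame (UGr L UL).
have := box_far _ (coords_of_orthonormal F_on).
rewrite /far_from coords_ofK spanF => /(_ F_on UL y yL y0).
by rewrite leNgt ye.
Qed.

Theorem mainTheorem18 (R : realType) (k n : nat) (hkn : (k < n)%N)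
  (U : set {vspace 'rV[R[i]]_n.+1}) (hU : forall L, U L -> isGr R k n L) :
  (Gr_open R k n U -> PS_open (Gr_union U)) /\
  (Gr_closed R k n U -> PS_closed (Gr_union U)).
Proof. by split; [exact: Gr_union_open | exact: Gr_union_closed]. Qed.
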